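(* Let $X_0,X_1,\ldots$ be a stationary mean-zero Gaussian sequence with covariance $\Gamma(k)=\mathrm{E}[X_0X_k]$, $\Gamma(0)=1$, having a spectral density $f$ (so $\Gamma(k)=\int_{-\pi}^{\pi}e^{-ik\phi}f(\phi)\,d\phi$) which is continuous and strictly positive on $[-\pi,\pi]$. Let $K=K_n$ be real numbers with $K=o\!\left(\sqrt{n/\log\log n}\right)$. With $$A(x)=\sum_{k=0}^{n}\sum_{j=0}^{n}\Gamma(k-j)x^{k+j},\quad B(x)=\sum_{k=0}^{n}\sum_{j=0}^{n}\Gamma(k-j)\,k\,x^{k+j-1},\quad C(x)=\sum_{k=0}^{n}\sum_{j=0}^{n}\Gamma(k-j)\,kj\,x^{k+j-2},$$ and $$F_2(x)=\frac{1}{\pi}\,\frac{\sqrt{2}\,|B(x)K|}{A(x)^{3/2}}\exp\!\left(-\frac{K^2}{2A(x)}\right)\mathrm{erf}\!\left(\frac{|B(x)K|}{\sqrt{2A(x)\left(A(x)C(x)-B(x)^2\right)}}\right),$$ we have, as $n\to\infty$, $$\int_{-1}^{1}F_2(x)\,dx=o(\log\log n).$$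
   Context: $A,B,C$ are $\mathrm{E}[P_n(x)^2]$, $\mathrm{E}[P_n(x)P_n'(x)]$, $\mathrm{E}[P_n'(x)^2]$ for $P_n(x)=\sum_{k=0}^nX_kx^k$. $\mathrm{erf}(u)=\frac{2}{\sqrt{\pi}}\int_0^u e^{-t^2}dt$. *)

From Stdlib Require Import Reals ZArith.
From Coquelicot Require Import Coquelicot.
Open Scope R_scope.

Definition erf (u : R) : R :=
  2 / sqrt PI * RInt (fun t => exp (- t ^ 2)) 0 u.

Definition Apoly (Gam : Z -> R) (n : nat) (x : R) : R :=
  sum_f_R0 (fun k => sum_f_R0 (fun j =>
    Gam (Z.of_nat k - Z.of_nat j)%Z * x ^ (k + j)) n) n.

(* B(x) = sum sum Gamma(k-j) k x^(k+j-1)  (the k = 0 terms vanish, so the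
   truncated nat exponent is harmless) *)
Definition Bpoly (Gam : Z -> R) (n : nat) (x : R) : R :=
  sum_f_R0 (fun k => sum_f_R0 (fun j =>
    Gam (Z.of_nat k - Z.of_nat j)%Z * INR k * x ^ (k + j - 1)) n) n.

(* C(x) = sum sum Gamma(k-j) k j x^(k+j-2)  (terms with k = 0 or j = 0 vanish) *)
Definition Cpoly (Gam : Z -> R) (n : nat) (x : R) : R :=
  sum_f_R0 (fun k => sum_f_R0 (fun j =>
    Gam (Z.of_nat k - Z.of_nat j)%Z * (INR k * INR j) * x ^ (k + j - 2)) n) n.

Definition F2 (Gam : Z -> R) (K : R) (n : nat) (x : R) : R :=
  let A := Apoly Gam n x in
  let B := Bpoly Gam n x in
  let C := Cpoly Gam n x in
  / PI * (sqrt 2 * Rabs (B * K) / Rpower A (3 / 2))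
       * exp (- (K ^ 2) / (2 * A))
       * erf (Rabs (B * K) / sqrt (2 * A * (A * C - B ^ 2))).

(* With Gam(k) the cosine moments of f, A, B and C are the Toeplitz forms
   T(a,a), T(b,a) and T(b,b), where a_k = x^k, b_k = k x^(k-1) and
   T(a,b) = int Re (sum_k a_k e^(ik phi)) conj (sum_j b_j e^(ij phi)) f(phi) dphi.
   Since 0 < m <= f <= M on [-pi, pi], T(a,a) is comparable to 2 pi sum_k a_k^2;
   with v = 1 - x^2 + 1/(n+1) this gives A of order 1/v and C = O(v^-3), and
   positivity of T gives B^2 < AC.  Bounding erf by 3 and exp(-s) by 1/(1+s),
   |F2(x)| is at most a constant times |K| / (sqrt u (1 + c K^2 u)) with
   u = 1 - |x| + 1/(n+1), whose integral is an arctangent bounded independently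
   of n and K. *)

From Stdlib Require Import Reals ZArith Lra Lia.
From Coquelicot Require Import Coquelicot.
Open Scope R_scope.

Lemma continuous_R_const (c x : R) : continuous (fun _ => c) x.
Proof. apply continuous_const. Qed.

Lemma continuous_R_plus (f g : R -> R) (x : R) :
  continuous f x -> continuous g x -> continuous (fun y => f y + g y) x.
Proof. apply (continuous_plus f g). Qed.

Lemma continuous_R_opp (f : R -> R) (x : R) :
  continuous f x -> continuous (fun y => - f y) x.
Proof. apply (continuous_opp f). Qed.

Lemma continuous_R_minus (f g : R -> R) (x : R) :
  continuous f x -> continuous g x -> continuous (fun y => f y - g y) x.
Proof. intros; now apply continuous_R_plus, continuous_R_opp. Qed.

Lemma continuous_R_mult (f g : R -> R) (x : R) :
  continuous f x -> continuous g x -> continuous (fun y => f y * g y) x.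
Proof. apply (continuous_mult f g). Qed.

Lemma continuous_R_pow (f : R -> R) (k : nat) (x : R) :
  continuous f x -> continuous (fun y => f y ^ k) x.
Proof.
  intros Hf; induction k as [|k IH]; simpl.
  - apply continuous_R_const.
  - now apply continuous_R_mult.
Qed.

Lemma continuous_sum_f_R0 (g : nat -> R -> R) (n : nat) (x : R) :
  (forall k, (k <= n)%nat -> continuous (g k) x) ->
  continuous (fun y => sum_f_R0 (fun k => g k y) n) x.
Proof.
  induction n as [|n IH]; intros Hg; simpl.
  - apply Hg; lia.
  - apply continuous_R_plus; [apply IH; intros |]; apply Hg; lia.
Qed.

Ltac continuity_R :=
  repeat match goal with
  | |- continuous (fun _ => ?c) _ => apply continuous_R_const
  | |- continuous (fun y => y) _ => apply continuous_id
  | |- continuous (fun y => @?f y + @?g y) _ => apply (continuous_R_plus f g)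
  | |- continuous (fun y => @?f y - @?g y) _ => apply (continuous_R_minus f g)
  | |- continuous (fun y => - @?f y) _ => apply (continuous_R_opp f)
  | |- continuous (fun y => @?f y * @?g y) _ => apply (continuous_R_mult f g)
  | |- continuous (fun y => @?f y ^ _) _ => apply (continuous_R_pow f)
  | |- continuous (fun y => exp (@?f y)) _ => apply (continuous_exp_comp f)
  | |- continuous (fun y => cos (@?f y)) _ => apply (continuous_cos_comp f)
  | |- continuous (fun y => sin (@?f y)) _ => apply (continuous_sin_comp f)
  | |- continuous (fun y => sqrt (@?f y)) _ => apply (continuous_sqrt_comp f)
  | |- continuous (fun y => Rabs (@?f y)) _ => apply (continuous_Rabs_comp f)
  | |- continuous (fun y => / @?f y) _ => apply (continuous_Rinv_comp f)
  | |- continuous (fun y => sum_f_R0 (fun k => @?g k y) _) _ =>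
      apply (continuous_sum_f_R0 g); intros; cbv beta
  | H : forall p, continuous ?f p |- continuous ?f _ => apply H
  | H : continuous ?f ?p |- continuous ?f ?p => exact H
  end.

Lemma ex_RInt_continuous_R (g : R -> R) (a b : R) :
  (forall z, Rmin a b <= z <= Rmax a b -> continuous g z) -> ex_RInt g a b.
Proof. apply (ex_RInt_continuous (V := R_CompleteNormedModule)). Qed.

Lemma sum_f_R0_scal_l (c : R) (u : nat -> R) (n : nat) :
  c * sum_f_R0 u n = sum_f_R0 (fun k => c * u k) n.
Proof. rewrite scal_sum. apply sum_eq; intros; ring. Qed.

Lemma sum_f_R0_mult (u v : nat -> R) (n : nat) :
  sum_f_R0 u n * sum_f_R0 v n = sum_f_R0 (fun k => sum_f_R0 (fun j => u k * v j) n) n.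
Proof.
  rewrite (Rmult_comm (sum_f_R0 u n)), scal_sum.
  apply sum_eq; intros; now rewrite sum_f_R0_scal_l.
Qed.

Lemma ex_RInt_sum_f_R0 (g : nat -> R -> R) (a b : R) (n : nat) :
  (forall k, (k <= n)%nat -> ex_RInt (g k) a b) ->
  ex_RInt (fun x => sum_f_R0 (fun k => g k x) n) a b.
Proof.
  induction n as [|n IH]; intros Hg; simpl.
  - apply Hg; lia.
  - apply (ex_RInt_plus (fun x => sum_f_R0 (fun k => g k x) n) (g (S n)));
      [apply IH; intros |]; apply Hg; lia.
Qed.

Lemma RInt_sum_f_R0 (g : nat -> R -> R) (a b : R) (n : nat) :
  (forall k, (k <= n)%nat -> ex_RInt (g k) a b) ->
  RInt (fun x => sum_f_R0 (fun k => g k x) n) a b = sum_f_R0 (fun k => RInt (g k) a b) n.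
Proof.
  induction n as [|n IH]; intros Hg; simpl; [reflexivity |].
  rewrite <- IH by (intros; apply Hg; lia).
  apply (RInt_plus (fun x => sum_f_R0 (fun k => g k x) n) (g (S n)));
    [apply ex_RInt_sum_f_R0; intros |]; apply Hg; lia.
Qed.

Lemma RInt_scal_R (c : R) (g : R -> R) (a b : R) :
  ex_RInt g a b -> RInt (fun x => c * g x) a b = c * RInt g a b.
Proof. apply (RInt_scal g a b c). Qed.

Lemma ex_RInt_scal_R (c : R) (g : R -> R) (a b : R) :
  ex_RInt g a b -> ex_RInt (fun x => c * g x) a b.
Proof. apply (ex_RInt_scal g a b c). Qed.

Definition cos_moment (w : R -> R) (z : R) : R :=
  RInt (fun p => cos (z * p) * w p) (- PI) PI.

Definition toeplitz_form (w : R -> R) (a b : nat -> R) (n : nat) : R :=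
  sum_f_R0 (fun k => sum_f_R0 (fun j => a k * b j * cos_moment w (INR k - INR j)) n) n.

Definition cos_poly (a : nat -> R) (n : nat) (p : R) : R :=
  sum_f_R0 (fun k => a k * cos (INR k * p)) n.
Definition sin_poly (a : nat -> R) (n : nat) (p : R) : R :=
  sum_f_R0 (fun k => a k * sin (INR k * p)) n.

(* The real part of (sum a_k e^(ikp)) * conj (sum b_j e^(ijp)). *)
Definition trig_pairing (a b : nat -> R) (n : nat) (p : R) : R :=
  cos_poly a n p * cos_poly b n p + sin_poly a n p * sin_poly b n p.

Lemma trig_pairing_expand (a b : nat -> R) (n : nat) (p : R) :
  trig_pairing a b n p =
  sum_f_R0 (fun k => sum_f_R0 (fun j => a k * b j * cos ((INR k - INR j) * p)) n) n.
Proof.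
  unfold trig_pairing, cos_poly, sin_poly.
  rewrite !sum_f_R0_mult, <- plus_sum. apply sum_eq; intros.
  rewrite <- plus_sum. apply sum_eq; intros.
  rewrite Rmult_minus_distr_r, cos_minus. ring.
Qed.

Lemma trig_pairing_sym (a b : nat -> R) (n : nat) (p : R) :
  trig_pairing a b n p = trig_pairing b a n p.
Proof. unfold trig_pairing. ring. Qed.

Lemma trig_pairing_diag_ge0 (a : nat -> R) (n : nat) (p : R) : 0 <= trig_pairing a a n p.
Proof. unfold trig_pairing. nra. Qed.

Lemma continuous_trig_pairing (a b : nat -> R) (n : nat) (p : R) :
  continuous (trig_pairing a b n) p.
Proof. unfold trig_pairing, cos_poly, sin_poly. continuity_R. Qed.

Section Weight.
Variable w : R -> R.
Hypothesis w_cont : forall p, continuous w p.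

Lemma ex_RInt_cos_moment (z : R) : ex_RInt (fun p => cos (z * p) * w p) (- PI) PI.
Proof. apply ex_RInt_continuous_R; intros; continuity_R. Qed.

Lemma ex_RInt_trig_pairing_weight (a b : nat -> R) (n : nat) :
  ex_RInt (fun p => trig_pairing a b n p * w p) (- PI) PI.
Proof.
  apply ex_RInt_continuous_R; intros.
  apply continuous_R_mult; [apply continuous_trig_pairing | apply w_cont].
Qed.

Lemma toeplitz_form_RInt (a b : nat -> R) (n : nat) :
  toeplitz_form w a b n = RInt (fun p => trig_pairing a b n p * w p) (- PI) PI.
Proof.
  rewrite (RInt_ext _ (fun p => sum_f_R0 (fun k => sum_f_R0 (fun j =>
      a k * b j * (cos ((INR k - INR j) * p) * w p)) n) n)).
  2:{ intros. rewrite trig_pairing_expand, Rmult_comm, sum_f_R0_scal_l.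
      apply sum_eq; intros. rewrite sum_f_R0_scal_l. apply sum_eq; intros. ring. }
  rewrite RInt_sum_f_R0.
  - apply sum_eq; intros. rewrite RInt_sum_f_R0.
    + apply sum_eq; intros. now rewrite RInt_scal_R by apply ex_RInt_cos_moment.
    + intros; apply ex_RInt_scal_R, ex_RInt_cos_moment.
  - intros; apply ex_RInt_sum_f_R0; intros; apply ex_RInt_scal_R, ex_RInt_cos_moment.
Qed.

Lemma toeplitz_form_sym (a b : nat -> R) (n : nat) :
  toeplitz_form w a b n = toeplitz_form w b a n.
Proof.
  rewrite !toeplitz_form_RInt. apply RInt_ext; intros. now rewrite trig_pairing_sym.
Qed.

Lemma toeplitz_form_quad (a b : nat -> R) (n : nat) (t : R) :
  toeplitz_form w (fun k => t * a k + b k) (fun k => t * a k + b k) n =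
  t ^ 2 * toeplitz_form w a a n + 2 * t * toeplitz_form w b a n + toeplitz_form w b b n.
Proof.
  replace (2 * t * toeplitz_form w b a n)
    with (t * toeplitz_form w a b n + t * toeplitz_form w b a n)
    by (rewrite (toeplitz_form_sym a b); ring).
  unfold toeplitz_form. rewrite !sum_f_R0_scal_l, <- !plus_sum. apply sum_eq; intros.
  rewrite !sum_f_R0_scal_l, <- !plus_sum. apply sum_eq; intros. ring.
Qed.

End Weight.

Lemma sin_nat_diff_PI (k j : nat) : sin ((INR k - INR j) * PI) = 0.
Proof.
  apply sin_eq_0_1. exists (Z.of_nat k - Z.of_nat j)%Z.
  now rewrite minus_IZR, <- !INR_IZR_INZ.
Qed.

Lemma cos_moment_const (c : R) (k j : nat) :
  cos_moment (fun _ => c) (INR k - INR j) = if Nat.eqb k j then 2 * PI * c else 0.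
Proof.
  unfold cos_moment. destruct (Nat.eqb_spec k j) as [<- | Hkj].
  - rewrite (RInt_ext _ (fun _ => c)), RInt_const.
    + unfold scal; simpl; unfold mult; simpl. ring.
    + intros. rewrite Rminus_diag, Rmult_0_l, cos_0; apply Rmult_1_l.
  - assert (Hz : INR k - INR j <> 0) by (intro H; apply Hkj, INR_eq; lra).
    set (z := INR k - INR j) in *.
    apply is_RInt_unique.
    replace 0 with (minus (c * sin (z * PI) / z) (c * sin (z * - PI) / z)).
    + apply (is_RInt_derive (fun p => c * sin (z * p) / z)).
      * intros. auto_derive; [easy | field; easy].
      * intros. continuity_R.
    + rewrite <- Ropp_mult_distr_r, sin_neg. unfold z. rewrite sin_nat_diff_PI.
      unfold minus, plus, opp; simpl. field; easy.
Qed.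

Lemma sum_f_R0_kronecker (k n : nat) (c : R) : (k <= n)%nat ->
  sum_f_R0 (fun j => if Nat.eqb k j then c else 0) n = c.
Proof.
  induction n as [|n IH]; intros Hk; simpl.
  - now replace k with 0%nat by lia.
  - destruct (Nat.eqb_spec k (S n)) as [-> | Hne].
    + rewrite sum_eq_R0; [ring |]. intros i Hi. destruct (Nat.eqb_spec (S n) i); [lia | easy].
    + rewrite IH by lia. ring.
Qed.

Lemma toeplitz_form_const (c : R) (a b : nat -> R) (n : nat) :
  toeplitz_form (fun _ => c) a b n = 2 * PI * c * sum_f_R0 (fun k => a k * b k) n.
Proof.
  unfold toeplitz_form. rewrite sum_f_R0_scal_l. apply sum_eq; intros k Hk.
  rewrite (sum_eq _ (fun j => if Nat.eqb k j then a k * b k * (2 * PI * c) else 0)).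
  - rewrite sum_f_R0_kronecker by easy. ring.
  - intros j Hj. rewrite cos_moment_const. destruct (Nat.eqb_spec k j) as [<- |]; ring.
Qed.

Lemma toeplitz_form_monotone (w1 w2 : R -> R) (a : nat -> R) (n : nat) :
  (forall p, continuous w1 p) -> (forall p, continuous w2 p) -> (forall p, w1 p <= w2 p) ->
  toeplitz_form w1 a a n <= toeplitz_form w2 a a n.
Proof.
  intros H1 H2 H12. rewrite !toeplitz_form_RInt by easy.
  apply RInt_le; try apply ex_RInt_trig_pairing_weight; try easy.
  - pose proof PI_RGT_0; lra.
  - intros p _. apply Rmult_le_compat_l; [apply trig_pairing_diag_ge0 | apply H12].
Qed.

Section BoundedWeight.
Variables (w : R -> R) (m M : R).
Hypothesis w_cont : forall p, continuous w p.
Hypothesis m_pos : 0 < m.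
Hypothesis w_ge : forall p, m <= w p.
Hypothesis w_le : forall p, w p <= M.

Lemma toeplitz_form_ge (a : nat -> R) (n : nat) :
  2 * PI * m * sum_f_R0 (fun k => a k * a k) n <= toeplitz_form w a a n.
Proof.
  rewrite <- toeplitz_form_const.
  apply toeplitz_form_monotone; intros; [continuity_R | easy | easy].
Qed.

Lemma toeplitz_form_le (a : nat -> R) (n : nat) :
  toeplitz_form w a a n <= 2 * PI * M * sum_f_R0 (fun k => a k * a k) n.
Proof.
  rewrite <- toeplitz_form_const.
  apply toeplitz_form_monotone; intros; [easy | continuity_R | easy].
Qed.

Lemma toeplitz_form_pos (a : nat -> R) (n : nat) :
  0 < sum_f_R0 (fun k => a k * a k) n -> 0 < toeplitz_form w a a n.
Proof.
  intros Ha. eapply Rlt_le_trans; [| apply toeplitz_form_ge].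
  pose proof PI_RGT_0. apply Rmult_lt_0_compat; [nra | easy].
Qed.

(* Positivity of the form at t a + b with t = - B / A. *)
Lemma toeplitz_form_cauchy_schwarz_strict (a b : nat -> R) (n : nat) :
  0 < sum_f_R0 (fun k => a k * a k) n ->
  (forall t, 0 < sum_f_R0 (fun k => (t * a k + b k) * (t * a k + b k)) n) ->
  toeplitz_form w b a n ^ 2 < toeplitz_form w a a n * toeplitz_form w b b n.
Proof.
  intros Ha Hab.
  pose proof (toeplitz_form_pos a n Ha) as HA.
  set (A := toeplitz_form w a a n) in *.
  set (B := toeplitz_form w b a n). set (C := toeplitz_form w b b n).
  pose proof (toeplitz_form_pos _ n (Hab (- B / A))) as Hq.
  rewrite toeplitz_form_quad in Hq by easy. fold A B C in Hq.
  replace ((- B / A) ^ 2 * A + 2 * (- B / A) * B + C) with ((A * C - B ^ 2) / A)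
    in Hq by (field; lra).
  apply (Rmult_lt_compat_r A) in Hq; [| easy].
  unfold Rdiv in Hq. rewrite Rmult_assoc, Rinv_l, Rmult_1_r in Hq; lra.
Qed.

End BoundedWeight.

Definition pow_seq (x : R) (k : nat) : R := x ^ k.
Definition dpow_seq (x : R) (k : nat) : R := INR k * x ^ (k - 1).

Lemma sum_pow_seq_sq (x : R) (n : nat) :
  sum_f_R0 (fun k => pow_seq x k * pow_seq x k) n = sum_f_R0 (fun k => (x * x) ^ k) n.
Proof. apply sum_eq; intros. unfold pow_seq. now rewrite Rpow_mult_distr. Qed.

Lemma sum_dpow_seq_sq (x : R) (n : nat) :
  sum_f_R0 (fun k => dpow_seq x k * dpow_seq x k) n =
  sum_f_R0 (fun k => INR k * INR k * (x * x) ^ (k - 1)) n.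
Proof. apply sum_eq; intros. unfold dpow_seq. rewrite Rpow_mult_distr. ring. Qed.

Lemma sum_first_le (u : nat -> R) (n : nat) :
  (forall i, 0 <= u i) -> u 0%nat <= sum_f_R0 u n.
Proof.
  intros Hu. induction n as [|n IH]; simpl; [lra |]. pose proof (Hu (S n)). lra.
Qed.

Lemma sum_first_two_le (u : nat -> R) (n : nat) :
  (forall i, 0 <= u i) -> (1 <= n)%nat -> u 0%nat + u 1%nat <= sum_f_R0 u n.
Proof.
  intros Hu Hn. induction n as [|n IH]; [lia |].
  destruct n as [|n]; simpl in *; [lra |].
  pose proof (IH ltac:(lia)). pose proof (Hu (S (S n))). lra.
Qed.

Lemma sum_pow_seq_pos (x : R) (n : nat) :
  0 < sum_f_R0 (fun k => pow_seq x k * pow_seq x k) n.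
Proof.
  eapply Rlt_le_trans; [| apply sum_first_le; intros; apply Rle_0_sqr].
  unfold pow_seq; simpl; lra.
Qed.

Lemma sum_pow_dpow_pencil_pos (x t : R) (n : nat) : (1 <= n)%nat ->
  0 < sum_f_R0 (fun k => (t * pow_seq x k + dpow_seq x k) * (t * pow_seq x k + dpow_seq x k)) n.
Proof.
  intros Hn. eapply Rlt_le_trans; [| apply sum_first_two_le; [intros; apply Rle_0_sqr | easy]].
  unfold pow_seq, dpow_seq; simpl.
  destruct (Req_dec t 0) as [-> | Ht]; [nra |].
  apply Rplus_lt_le_0_compat; [| apply Rle_0_sqr].
  rewrite Rmult_0_l, !Rmult_1_r, Rplus_0_r. now apply Rsqr_pos_lt.
Qed.

Section Representation.
Variables (Gam : Z -> R) (w : R -> R).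
Hypothesis Gam_moment : forall k j : nat,
  Gam (Z.of_nat k - Z.of_nat j)%Z = cos_moment w (INR k - INR j).

Lemma Apoly_toeplitz (n : nat) (x : R) :
  Apoly Gam n x = toeplitz_form w (pow_seq x) (pow_seq x) n.
Proof.
  apply sum_eq; intros; apply sum_eq; intros.
  rewrite Gam_moment, pow_add. unfold pow_seq. ring.
Qed.

Lemma Bpoly_toeplitz (n : nat) (x : R) :
  Bpoly Gam n x = toeplitz_form w (dpow_seq x) (pow_seq x) n.
Proof.
  apply sum_eq; intros k _; apply sum_eq; intros j _.
  rewrite Gam_moment. unfold pow_seq, dpow_seq.
  destruct k as [|k]; [simpl; ring |].
  replace (S k + j - 1)%nat with (S k - 1 + j)%nat by lia. rewrite pow_add. ring.
Qed.

Lemma Cpoly_toeplitz (n : nat) (x : R) :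
  Cpoly Gam n x = toeplitz_form w (dpow_seq x) (dpow_seq x) n.
Proof.
  apply sum_eq; intros k _; apply sum_eq; intros j _.
  rewrite Gam_moment. unfold dpow_seq.
  destruct k as [|k]; [simpl; ring |]. destruct j as [|j]; [simpl; ring |].
  replace (S k + S j - 2)%nat with (S k - 1 + (S j - 1))%nat by lia. rewrite pow_add. ring.
Qed.

End Representation.

Definition power_sum (c : nat -> R) (y : R) (n : nat) : R := sum_f_R0 (fun k => c k * y ^ k) n.

Definition backward_diff (c : nat -> R) (k : nat) : R :=
  match k with O => c O | S k' => c (S k') - c k' end.

Lemma power_sum_abel (c : nat -> R) (y : R) (n : nat) :
  (1 - y) * power_sum c y n = power_sum (backward_diff c) y n - c n * y ^ S n.
Proof.
  unfold power_sum. induction n as [|n IH]; simpl; [ring |].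
  rewrite Rmult_plus_distr_l, IH. simpl. ring.
Qed.

Lemma power_sum_le (c1 c2 : nat -> R) (y : R) (n : nat) :
  0 <= y -> (forall k, c1 k <= c2 k) -> power_sum c1 y n <= power_sum c2 y n.
Proof.
  intros Hy Hc. apply sum_Rle; intros.
  apply Rmult_le_compat_r; [now apply pow_le | apply Hc].
Qed.

Lemma power_sum_abel_le (c d : nat -> R) (y : R) (n : nat) :
  0 <= y -> 0 <= c n -> (forall k, backward_diff c k <= d k) ->
  (1 - y) * power_sum c y n <= power_sum d y n.
Proof.
  intros Hy Hcn Hd. rewrite power_sum_abel.
  pose proof (power_sum_le _ _ y n Hy Hd).
  assert (0 <= c n * y ^ S n) by (apply Rmult_le_pos; [easy | now apply pow_le]). lra.
Qed.

Lemma pow_le_one (y : R) (k : nat) : 0 <= y <= 1 -> y ^ k <= 1.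
Proof. intros. rewrite <- (pow1 k). apply pow_incr. lra. Qed.

Lemma INR_S_pos (n : nat) : 0 < INR (S n).
Proof. apply lt_0_INR; lia. Qed.

Section PowerSums.
Variables (y : R) (n : nat).
Hypothesis y_unit : 0 <= y <= 1.

Let Sg := sum_f_R0 (fun k => y ^ k) n.
Let Sq := sum_f_R0 (fun k => INR k * INR k * y ^ (k - 1)) n.
Let h := / INR (S n).
Let d := 1 - y.

Lemma geom_sum_telescope : d * Sg = 1 - y ^ (S n).
Proof.
  unfold d, Sg. induction n as [|m IH]; simpl; [ring |].
  rewrite Rmult_plus_distr_l, IH. simpl. ring.
Qed.

Lemma geom_sum_le : Sg <= INR (S n).
Proof.
  unfold Sg. rewrite <- (Rmult_1_l (INR (S n))), <- sum_cte.
  apply sum_Rle; intros. now apply pow_le_one.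
Qed.

Lemma geom_sum_ge : INR (S n) * y ^ n <= Sg.
Proof.
  unfold Sg. rewrite Rmult_comm, <- sum_cte. apply sum_Rle; intros i Hi.
  replace n with (i + (n - i))%nat at 1 by lia. rewrite pow_add.
  pose proof (pow_le y i (proj1 y_unit)). pose proof (pow_le_one y (n - i) y_unit). nra.
Qed.

Lemma geom_sum_scaled_ge : 1 <= Sg * (d + h).
Proof.
  pose proof geom_sum_telescope. pose proof geom_sum_ge. pose proof (INR_S_pos n).
  assert (y ^ S n <= y ^ n) by (simpl; pose proof (pow_le y n (proj1 y_unit)); nra).
  assert (y ^ n <= Sg * h).
  { unfold h. apply (Rmult_le_reg_r (INR (S n))); [easy |].
    rewrite Rmult_assoc, Rinv_l by lra. lra. }
  nra.
Qed.

Lemma geom_sum_scaled_le : Sg * (d + h) <= 2.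
Proof.
  pose proof geom_sum_telescope. pose proof geom_sum_le. pose proof (INR_S_pos n).
  assert (0 <= y ^ S n) by (apply pow_le; lra).
  assert (Sg * h <= 1).
  { unfold h. apply (Rmult_le_reg_r (INR (S n))); [easy |].
    rewrite Rmult_assoc, Rinv_l by lra. lra. }
  nra.
Qed.

Lemma sq_sum_le_cube : Sq <= INR (S n) ^ 3.
Proof.
  unfold Sq. replace (INR (S n) ^ 3) with (INR (S n) ^ 2 * INR (S n)) by ring.
  rewrite <- sum_cte. apply sum_Rle; intros i Hi.
  pose proof (pow_le_one y (i - 1) y_unit). pose proof (pow_le y (i - 1) (proj1 y_unit)).
  assert (INR i <= INR (S n)) by (apply le_INR; lia). pose proof (pos_INR i).
  assert (INR i * INR i <= INR (S n) ^ 2) by nra. nra.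
Qed.

Lemma sq_sum_le_shifted : Sq <= power_sum (fun k => (INR k + 1) ^ 2) y n.
Proof.
  unfold Sq, power_sum. destruct n as [|m]; [simpl; lra |].
  rewrite decomp_sum, tech5 by lia. simpl Nat.pred.
  rewrite Rmult_0_l, Rmult_0_l, Rplus_0_l.
  assert (0 <= (INR (S m) + 1) ^ 2 * y ^ S m)
    by (apply Rmult_le_pos; [apply pow2_ge_0 | apply pow_le; lra]).
  enough (sum_f_R0 (fun i => INR (S i) * INR (S i) * y ^ (S i - 1)) m
          = sum_f_R0 (fun k => (INR k + 1) ^ 2 * y ^ k) m) by lra.
  apply sum_eq; intros i _. replace (S i - 1)%nat with i by lia. rewrite S_INR. ring.
Qed.

(* Two Abel summations: (1-y) lowers the weight k^2 to 2k+1 and then to 2. *)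
Lemma sq_sum_one_minus_cube_le : d ^ 3 * Sq <= 2.
Proof.
  assert (Hd : 0 <= d) by (unfold d; lra).
  assert (H1 : d * power_sum (fun k => (INR k + 1) ^ 2) y n
               <= power_sum (fun k => 2 * INR k + 1) y n).
  { apply power_sum_abel_le; [lra | apply pow2_ge_0 |].
    intros [|k]; unfold backward_diff; [simpl; lra | rewrite S_INR; nra]. }
  assert (H2 : d * power_sum (fun k => 2 * INR k + 1) y n <= power_sum (fun _ => 2) y n).
  { apply power_sum_abel_le; [lra | pose proof (pos_INR n); lra |].
    intros [|k]; unfold backward_diff; [simpl; lra | rewrite S_INR; lra]. }
  assert (H3 : power_sum (fun _ => 2) y n = 2 * Sg).
  { unfold power_sum, Sg. rewrite scal_sum. apply sum_eq; intros; ring. }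
  pose proof geom_sum_telescope. pose proof sq_sum_le_shifted.
  assert (0 <= y ^ S n) by (apply pow_le; lra).
  assert (0 <= d * d) by nra.
  assert (d ^ 3 * Sq <= d * d * (d * power_sum (fun k => (INR k + 1) ^ 2) y n)).
  { replace (d ^ 3 * Sq) with (d * d * d * Sq) by ring. rewrite <- Rmult_assoc.
    apply Rmult_le_compat_l; [nra | easy]. }
  assert (d * d * (d * power_sum (fun k => (INR k + 1) ^ 2) y n)
          <= d * (d * power_sum (fun k => 2 * INR k + 1) y n)).
  { rewrite Rmult_assoc. apply Rmult_le_compat_l; [easy |]. now apply Rmult_le_compat_l. }
  assert (d * (d * power_sum (fun k => 2 * INR k + 1) y n) <= d * (2 * Sg)).
  { apply Rmult_le_compat_l; [easy | lra]. }
  lra.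
Qed.

Lemma sq_sum_scaled_le : Sq * (d + h) ^ 3 <= 16.
Proof.
  assert (Hd : 0 <= d) by (unfold d; lra).
  assert (Hh : 0 < h) by (apply Rinv_0_lt_compat, INR_S_pos).
  assert (HS2 : 0 <= Sq).
  { apply cond_pos_sum. intros k. pose proof (pos_INR k).
    pose proof (pow_le y (k - 1) (proj1 y_unit)). apply Rmult_le_pos; nra. }
  pose proof sq_sum_one_minus_cube_le.
  assert (h ^ 3 * Sq <= 1).
  { pose proof sq_sum_le_cube. pose proof (INR_S_pos n).
    unfold h. rewrite pow_inv.
    assert (0 < INR (S n) ^ 3) by now apply pow_lt.
    apply (Rmult_le_reg_l (INR (S n) ^ 3)); [easy |].
    rewrite <- Rmult_assoc, Rinv_r by lra. lra. }
  assert ((d + h) ^ 3 <= 4 * (d ^ 3 + h ^ 3)).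
  { assert (0 <= (d + h) * (d - h) ^ 2) by (apply Rmult_le_pos; [lra | apply pow2_ge_0]).
    assert (4 * (d ^ 3 + h ^ 3) - (d + h) ^ 3 = 3 * ((d + h) * (d - h) ^ 2)) by ring. lra. }
  nra.
Qed.

End PowerSums.

Lemma exp_monotone (x y : R) : x <= y -> exp x <= exp y.
Proof. intros [H | ->]; [left; now apply exp_increasing | lra]. Qed.

Lemma exp_le_inv_one_plus (s : R) : 0 <= s -> exp (- s) <= / (1 + s).
Proof.
  intros Hs. rewrite exp_Ropp. apply Rinv_le_contravar; [lra | apply exp_ineq1_le].
Qed.

Lemma continuous_gauss (t : R) : continuous (fun t => exp (- t ^ 2)) t.
Proof. continuity_R. Qed.

Lemma continuous_erf (u : R) : continuous erf u.
Proof.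
  unfold erf. apply continuous_R_mult; [apply continuous_R_const |].
  apply (continuous_RInt_1 (fun t => exp (- t ^ 2)) 0 u).
  apply filter_forall. intros z. apply (RInt_correct (V := R_CompleteNormedModule)).
  apply ex_RInt_continuous_R; intros; apply continuous_gauss.
Qed.

(* exp (- t^2) <= exp (1 - 2 t) since (t - 1)^2 >= 0. *)
Lemma RInt_gauss_le (u : R) : 0 <= u -> RInt (fun t => exp (- t ^ 2)) 0 u <= 3 / 2.
Proof.
  intros Hu.
  assert (Hlin : is_RInt (fun t => exp (1 - 2 * t)) 0 u
                   (minus (- exp (1 - 2 * u) / 2) (- exp (1 - 2 * 0) / 2))).
  { apply (is_RInt_derive (fun t => - exp (1 - 2 * t) / 2)).
    - intros. auto_derive; [easy | unfold Rminus; field].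
    - intros. continuity_R. }
  apply Rle_trans with (RInt (fun t => exp (1 - 2 * t)) 0 u).
  - apply RInt_le; [easy | | eexists; apply Hlin |].
    + apply ex_RInt_continuous_R; intros; apply continuous_gauss.
    + intros t _. apply exp_monotone. pose proof (pow2_ge_0 (t - 1)). nra.
  - rewrite (is_RInt_unique _ _ _ _ Hlin). unfold minus, plus, opp; simpl.
    pose proof (exp_pos (1 - 2 * u)). rewrite Rmult_0_r, Rminus_0_r. pose proof exp_le_3. lra.
Qed.

Lemma erf_bounds (u : R) : 0 <= u -> 0 <= erf u <= 3.
Proof.
  intros Hu. pose proof PI_RGT_0.
  assert (Hsq : 1 <= sqrt PI).
  { rewrite <- sqrt_1. apply sqrt_le_1_alt. pose proof PI2_1. lra. }
  assert (H0 : 0 <= RInt (fun t => exp (- t ^ 2)) 0 u).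
  { apply RInt_ge_0; [easy | | intros; left; apply exp_pos].
    apply ex_RInt_continuous_R; intros; apply continuous_gauss. }
  pose proof (RInt_gauss_le u Hu).
  assert (0 < / sqrt PI <= 1).
  { split; [apply Rinv_0_lt_compat; lra |]. rewrite <- Rinv_1. apply Rinv_le_contravar; lra. }
  unfold erf, Rdiv. split; [| apply Rle_trans with (2 * 1 * (3 / 2)); [| lra]];
    repeat apply Rmult_le_compat; nra.
Qed.

Definition F2_shape (A B C K : R) : R :=
  / PI * (sqrt 2 * Rabs (B * K) / Rpower A (3 / 2))
       * exp (- (K ^ 2) / (2 * A))
       * erf (Rabs (B * K) / sqrt (2 * A * (A * C - B ^ 2))).

Lemma F2_as_shape (Gam : Z -> R) (K : R) (n : nat) (x : R) :
  F2 Gam K n x = F2_shape (Apoly Gam n x) (Bpoly Gam n x) (Cpoly Gam n x) K.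
Proof. reflexivity. Qed.

Lemma Rpower_three_halves (A : R) : 0 < A -> Rpower A (3 / 2) = A * sqrt A.
Proof.
  intros HA. replace (3 / 2) with (1 + / 2) by field.
  now rewrite Rpower_plus, Rpower_1, Rpower_sqrt.
Qed.

Lemma F2_shape_abs_le (A B C K : R) : 0 < A ->
  Rabs (F2_shape A B C K)
  <= 3 * sqrt 2 / PI * Rabs K * (Rabs B / (A * sqrt A)) * exp (- (K ^ 2) / (2 * A)).
Proof.
  intros HA. pose proof PI_RGT_0. unfold F2_shape.
  rewrite Rpower_three_halves by easy.
  assert (0 < sqrt A) by now apply sqrt_lt_R0.
  assert (0 <= sqrt 2) by apply sqrt_pos.
  pose proof (exp_pos (- (K ^ 2) / (2 * A))).
  set (u := Rabs (B * K) / sqrt (2 * A * (A * C - B ^ 2))).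
  assert (Hu : 0 <= u).
  { unfold u, Rdiv. apply Rmult_le_pos; [apply Rabs_pos |].
    destruct (sqrt_pos (2 * A * (A * C - B ^ 2))) as [Hs | <-];
      [left; now apply Rinv_0_lt_compat | rewrite Rinv_0; lra]. }
  pose proof (erf_bounds u Hu).
  set (X := / PI * (sqrt 2 * Rabs (B * K) / (A * sqrt A)) * exp (- (K ^ 2) / (2 * A))).
  assert (HX : 0 <= X).
  { assert (0 < / PI) by now apply Rinv_0_lt_compat.
    assert (0 < / (A * sqrt A)) by (apply Rinv_0_lt_compat; nra).
    pose proof (Rabs_pos (B * K)). unfold X, Rdiv. repeat apply Rmult_le_pos; lra. }
  rewrite Rabs_mult, (Rabs_right X), (Rabs_right (erf u)) by lra.
  apply Rle_trans with (X * 3); [apply Rmult_le_compat_l; lra |].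
  right. unfold X. rewrite Rabs_mult. field. lra.
Qed.

Section PointwiseEstimate.
Variables (A B C D S Q c1 c2 : R).
Hypotheses (c1_pos : 0 < c1) (A_pos : 0 < A) (D_pos : 0 < D).
Hypothesis cauchy_schwarz : B ^ 2 <= A * C.
Hypotheses (A_ge : c1 * S <= A) (A_le : A <= c2 * S) (C_le : C <= c2 * Q).
Hypotheses (SD_ge : 1 <= S * D) (SD_le : S * D <= 2) (QD_le : Q * D ^ 3 <= 16).

Lemma F2_ratio_estimate : Rabs B / (A * sqrt A) <= 4 * sqrt c2 / (c1 * sqrt D).
Proof.
  assert (HS : 0 < S) by nra.
  assert (Hc2 : 0 < c2) by nra.
  assert (HsA : 0 < sqrt A) by now apply sqrt_lt_R0.
  assert (HsD : 0 < sqrt D) by now apply sqrt_lt_R0.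
  assert (HC : C * D ^ 3 <= 16 * c2).
  { apply Rle_trans with (c2 * (Q * D ^ 3)); [| nra].
    replace (c2 * (Q * D ^ 3)) with (c2 * Q * D ^ 3) by ring.
    apply Rmult_le_compat_r; [apply pow_le; lra | easy]. }
  assert (HAD : c1 <= A * D) by nra.
  assert (Hkey : B ^ 2 * (c1 * c1 * D) <= 16 * c2 * (A * A * A)).
  { assert (0 <= C) by nra.
    apply Rle_trans with (A * C * ((A * D) * (A * D) * D)).
    - apply Rmult_le_compat; [apply pow2_ge_0 | nra | easy |].
      apply Rmult_le_compat_r; [lra | nra].
    - replace (A * C * (A * D * (A * D) * D)) with (A * A * A * (C * D ^ 3)) by ring.
      replace (16 * c2 * (A * A * A)) with (A * A * A * (16 * c2)) by ring.
      apply Rmult_le_compat_l; [nra | easy]. }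
  assert (HsA2 : sqrt A * sqrt A = A) by (apply sqrt_sqrt; lra).
  assert (HsD2 : sqrt D * sqrt D = D) by (apply sqrt_sqrt; lra).
  assert (Hsc2 : sqrt c2 * sqrt c2 = c2) by (apply sqrt_sqrt; lra).
  apply Rsqr_incr_0_var; unfold Rsqr.
  - replace (Rabs B / (A * sqrt A) * (Rabs B / (A * sqrt A)))
      with (Rabs B ^ 2 / (A * A * (sqrt A * sqrt A))) by (field; lra).
    replace (4 * sqrt c2 / (c1 * sqrt D) * (4 * sqrt c2 / (c1 * sqrt D)))
      with (16 * (sqrt c2 * sqrt c2) / (c1 * c1 * (sqrt D * sqrt D))) by (field; lra).
    rewrite pow2_abs, HsA2, HsD2, Hsc2.
    enough (0 <= 16 * c2 / (c1 * c1 * D) - B ^ 2 / (A * A * A)) by lra.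
    replace (16 * c2 / (c1 * c1 * D) - B ^ 2 / (A * A * A))
      with ((16 * c2 * (A * A * A) - B ^ 2 * (c1 * c1 * D)) / (c1 * c1 * D * (A * A * A)))
      by (field; lra).
    apply Rmult_le_pos; [lra | left; apply Rinv_0_lt_compat].
    repeat apply Rmult_lt_0_compat; lra.
  - apply Rmult_le_pos; [pose proof (sqrt_pos c2); lra |].
    left; apply Rinv_0_lt_compat; nra.
Qed.

Lemma F2_exp_estimate (K : R) : exp (- (K ^ 2) / (2 * A)) <= / (1 + K ^ 2 * D / (4 * c2)).
Proof.
  assert (HS : 0 < S) by nra.
  assert (Hc2 : 0 < c2) by nra.
  pose proof (pow2_ge_0 K).
  assert (H2A : D / (4 * c2) <= / (2 * A)).
  { apply Rmult_le_reg_r with (2 * A); [lra |]. rewrite Rinv_l by lra.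
    replace (D / (4 * c2) * (2 * A)) with (D * A / (2 * c2)) by (field; lra).
    apply Rmult_le_reg_r with (2 * c2); [lra |].
    replace (D * A / (2 * c2) * (2 * c2)) with (D * A) by (field; lra). nra. }
  apply Rle_trans with (exp (- (K ^ 2 * D / (4 * c2)))).
  - apply exp_monotone. unfold Rdiv.
    replace (- K ^ 2 * / (2 * A)) with (- (K ^ 2 * / (2 * A))) by ring.
    apply Ropp_le_contravar. rewrite Rmult_assoc. now apply Rmult_le_compat_l.
  - apply exp_le_inv_one_plus. unfold Rdiv. apply Rmult_le_pos; [nra |].
    left; apply Rinv_0_lt_compat; lra.
Qed.

Lemma F2_shape_estimate (K : R) :
  Rabs (F2_shape A B C K)
  <= 3 * sqrt 2 / PI * (4 * sqrt c2 / c1)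
     * (Rabs K / (sqrt D * (1 + K ^ 2 * D / (4 * c2)))).
Proof.
  pose proof PI_RGT_0.
  assert (Hc2 : 0 < c2) by nra.
  assert (HsD : 0 < sqrt D) by now apply sqrt_lt_R0.
  assert (Hden : 0 < 1 + K ^ 2 * D / (4 * c2)).
  { pose proof (pow2_ge_0 K).
    assert (0 <= K ^ 2 * D / (4 * c2)) by (apply Rmult_le_pos; [nra | left; apply Rinv_0_lt_compat; lra]).
    lra. }
  eapply Rle_trans; [now apply F2_shape_abs_le |].
  assert (0 <= 3 * sqrt 2 / PI * Rabs K).
  { pose proof (sqrt_pos 2). pose proof (Rabs_pos K).
    apply Rmult_le_pos; [| easy]. apply Rmult_le_pos; [lra | left; now apply Rinv_0_lt_compat]. }
  apply Rle_trans with
    (3 * sqrt 2 / PI * Rabs K * (4 * sqrt c2 / (c1 * sqrt D)) * / (1 + K ^ 2 * D / (4 * c2))).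
  - apply Rmult_le_compat; [| apply Rlt_le, exp_pos | | apply F2_exp_estimate].
    + apply Rmult_le_pos; [easy |]. apply Rmult_le_pos; [apply Rabs_pos |].
      left; apply Rinv_0_lt_compat. pose proof (sqrt_lt_R0 A A_pos). nra.
    + apply Rmult_le_compat_l; [easy | apply F2_ratio_estimate].
  - right. field; repeat split; try lra. pose proof (pow2_ge_0 K); nra.
Qed.

End PointwiseEstimate.

Section TailKernel.
Variables (K c : R).
Hypothesis c_pos : 0 < c.

Definition tail_kernel (v : R) : R := Rabs K / (sqrt v * (1 + K ^ 2 * v / c)).
Definition tail_primitive (v : R) : R := 2 * sqrt c * atan (Rabs K * sqrt v / sqrt c).

Lemma tail_kernel_den_pos (v : R) : 0 < v -> 0 < sqrt v * (1 + K ^ 2 * v / c).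
Proof.
  intros Hv. apply Rmult_lt_0_compat; [now apply sqrt_lt_R0 |].
  pose proof (pow2_ge_0 K).
  assert (0 <= K ^ 2 * v / c) by (apply Rmult_le_pos; [nra | left; now apply Rinv_0_lt_compat]).
  lra.
Qed.

Lemma is_derive_tail_primitive (v : R) : 0 < v -> is_derive tail_primitive v (tail_kernel v).
Proof.
  intros Hv. pose proof (tail_kernel_den_pos v Hv).
  assert (Hsv : 0 < sqrt v) by now apply sqrt_lt_R0.
  assert (Hsc : 0 < sqrt c) by now apply sqrt_lt_R0.
  unfold tail_primitive, tail_kernel. auto_derive; [easy |].
  rewrite <- (pow2_abs K).
  replace (Rabs K ^ 2 * v / c) with (Rabs K ^ 2 * sqrt v ^ 2 / sqrt c ^ 2)
    by (rewrite !pow2_sqrt; lra).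
  field. pose proof (pow2_ge_0 (Rabs K * sqrt v)).
  assert (0 < sqrt c ^ 2) by (apply pow_lt; lra). repeat split; lra.
Qed.

Lemma continuous_tail_kernel (v : R) : 0 < v -> continuous tail_kernel v.
Proof.
  intros Hv. unfold tail_kernel, Rdiv. continuity_R.
  now apply Rgt_not_eq, tail_kernel_den_pos.
Qed.

Lemma tail_primitive_bounds (v : R) : 0 <= v -> 0 <= tail_primitive v < PI * sqrt c.
Proof.
  intros Hv. unfold tail_primitive.
  assert (Hsc : 0 < sqrt c) by now apply sqrt_lt_R0.
  assert (Harg : 0 <= Rabs K * sqrt v / sqrt c).
  { apply Rmult_le_pos; [apply Rmult_le_pos; [apply Rabs_pos | apply sqrt_pos] |].
    left; now apply Rinv_0_lt_compat. }
  assert (0 <= atan (Rabs K * sqrt v / sqrt c)).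
  { destruct Harg as [Hlt | <-]; [rewrite <- atan_0; left; now apply atan_increasing | ].
    rewrite atan_0; lra. }
  pose proof (atan_bound (Rabs K * sqrt v / sqrt c)). split; nra.
Qed.

Lemma tail_kernel_antitone (v D : R) : 0 < v <= D -> tail_kernel D <= tail_kernel v.
Proof.
  intros Hv. unfold tail_kernel, Rdiv. apply Rmult_le_compat_l; [apply Rabs_pos |].
  apply Rinv_le_contravar; [now apply tail_kernel_den_pos |].
  pose proof (pow2_ge_0 K). pose proof (sqrt_pos v).
  assert (K ^ 2 * v / c <= K ^ 2 * D / c).
  { unfold Rdiv. apply Rmult_le_compat_r; [left; now apply Rinv_0_lt_compat | nra]. }
  assert (0 <= K ^ 2 * v / c) by (apply Rmult_le_pos; [nra | left; now apply Rinv_0_lt_compat]).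
  apply Rmult_le_compat; [easy | lra | apply sqrt_le_1_alt; lra | lra].
Qed.

Variable h : R.
Hypothesis h_pos : 0 < h.

Lemma RInt_tail_kernel_half (s : R) : s = 1 \/ s = - 1 ->
  RInt (fun x => tail_kernel (1 + h - s * x)) 0 s
  = s * (tail_primitive (1 + h) - tail_primitive h).
Proof.
  intros Hs.
  assert (Hdom : forall x, Rmin 0 s <= x <= Rmax 0 s -> 0 < 1 + h - s * x).
  { intros x Hx. destruct Hs as [-> | ->];
      [rewrite Rmin_left, Rmax_right in Hx | rewrite Rmin_right, Rmax_left in Hx]; lra. }
  apply is_RInt_unique.
  replace (s * (tail_primitive (1 + h) - tail_primitive h))
    with (minus (- s * tail_primitive (1 + h - s * s)) (- s * tail_primitive (1 + h - s * 0))).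
  2:{ unfold minus, plus, opp; simpl.
      replace (1 + h - s * s) with h by (destruct Hs as [-> | ->]; ring).
      rewrite Rmult_0_r, Rminus_0_r. ring. }
  apply (is_RInt_derive (fun x => - s * tail_primitive (1 + h - s * x))).
  - intros x Hx.
    replace (tail_kernel (1 + h - s * x)) with (- s * (- s * tail_kernel (1 + h - s * x)))
      by (destruct Hs as [-> | ->]; ring).
    apply (is_derive_scal (fun x => tail_primitive (1 + h - s * x))).
    apply (is_derive_comp tail_primitive (fun x => 1 + h - s * x));
      [now apply is_derive_tail_primitive, Hdom | auto_derive; [easy | ring]].
  - intros x Hx.
    apply (continuous_comp (fun x => 1 + h - s * x) tail_kernel); [continuity_R |].
    now apply continuous_tail_kernel, Hdom.
Qed.

Lemma ex_RInt_tail_kernel_abs (a b : R) : -1 <= a <= 1 -> -1 <= b <= 1 ->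
  ex_RInt (fun x => tail_kernel (1 - Rabs x + h)) a b.
Proof.
  intros Ha Hb. apply ex_RInt_continuous_R. intros x Hx.
  apply (continuous_comp (fun x => 1 - Rabs x + h) tail_kernel); [continuity_R |].
  apply continuous_tail_kernel.
  assert (-1 <= x <= 1).
  { split; [apply Rle_trans with (Rmin a b) | apply Rle_trans with (Rmax a b)];
      try apply Rmin_glb; try apply Rmax_lub; lra. }
  unfold Rabs; destruct Rcase_abs; lra.
Qed.

Lemma RInt_tail_kernel_abs_le :
  RInt (fun x => tail_kernel (1 - Rabs x + h)) (-1) 1 <= 2 * PI * sqrt c.
Proof.
  rewrite <- (RInt_Chasles _ (-1) 0 1) by (apply ex_RInt_tail_kernel_abs; lra).
  rewrite <- (opp_RInt_swap _ 0 (-1)) by (apply ex_RInt_tail_kernel_abs; lra).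
  rewrite (RInt_ext _ (fun x => tail_kernel (1 + h - (-1) * x)) 0 (-1)).
  2:{ intros x Hx. rewrite Rmin_right, Rmax_left in Hx by lra.
      rewrite Rabs_left by lra. f_equal; ring. }
  rewrite (RInt_ext _ (fun x => tail_kernel (1 + h - 1 * x)) 0 1).
  2:{ intros x Hx. rewrite Rmin_left, Rmax_right in Hx by lra.
      rewrite Rabs_right by lra. f_equal; ring. }
  rewrite !RInt_tail_kernel_half by lra.
  pose proof (tail_primitive_bounds (1 + h) ltac:(lra)).
  pose proof (tail_primitive_bounds h ltac:(lra)).
  unfold plus, opp; simpl. lra.
Qed.

End TailKernel.

Lemma continuous_Apoly (Gam : Z -> R) (n : nat) (x : R) : continuous (Apoly Gam n) x.
Proof. unfold Apoly. continuity_R. Qed.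
Lemma continuous_Bpoly (Gam : Z -> R) (n : nat) (x : R) : continuous (Bpoly Gam n) x.
Proof. unfold Bpoly. continuity_R. Qed.
Lemma continuous_Cpoly (Gam : Z -> R) (n : nat) (x : R) : continuous (Cpoly Gam n) x.
Proof. unfold Cpoly. continuity_R. Qed.

Lemma continuous_F2_shape (A B C : R -> R) (K x : R) :
  continuous A x -> continuous B x -> continuous C x ->
  0 < A x -> B x ^ 2 < A x * C x ->
  continuous (fun y => F2_shape (A y) (B y) (C y) K) x.
Proof.
  intros cA cB cC HA HD. unfold F2_shape, Rdiv, Rpower.
  assert (cln : continuous (fun y => ln (A y)) x)
    by (apply (continuous_comp A ln); [easy | now apply continuous_ln]).
  assert (cerf : forall g : R -> R, continuous g x -> continuous (fun y => erf (g y)) x)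
    by (intros g Hg; apply (continuous_comp g erf); [easy | apply continuous_erf]).
  continuity_R; try apply cerf; continuity_R.
  - apply Rgt_not_eq, exp_pos.
  - lra.
  - apply Rgt_not_eq, sqrt_lt_R0. apply Rmult_lt_0_compat; lra.
Qed.

Section SpectralBounds.
Variables (Gam : Z -> R) (w : R -> R) (m M : R).
Hypothesis w_cont : forall p, continuous w p.
Hypothesis m_pos : 0 < m.
Hypothesis w_ge : forall p, m <= w p.
Hypothesis w_le : forall p, w p <= M.
Hypothesis Gam_moment : forall k j : nat,
  Gam (Z.of_nat k - Z.of_nat j)%Z = cos_moment w (INR k - INR j).

Let c1 := 2 * PI * m.
Let c2 := 2 * PI * M.
Let kappa := 3 * sqrt 2 / PI * (4 * sqrt c2 / c1).

Lemma M_pos : 0 < M.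
Proof. pose proof (w_ge 0). pose proof (w_le 0). lra. Qed.

Lemma kappa_nonneg : 0 <= kappa.
Proof.
  pose proof PI_RGT_0. pose proof M_pos. unfold kappa, c1, c2, Rdiv.
  pose proof (sqrt_pos 2). pose proof (sqrt_pos (2 * PI * M)).
  assert (0 < / PI) by now apply Rinv_0_lt_compat.
  assert (0 < / (2 * PI * m)) by (apply Rinv_0_lt_compat; nra).
  apply Rmult_le_pos; [| apply Rmult_le_pos]; nra.
Qed.

Lemma Apoly_pos_Bpoly_sq_lt (n : nat) (x : R) : (1 <= n)%nat ->
  0 < Apoly Gam n x /\ Bpoly Gam n x ^ 2 < Apoly Gam n x * Cpoly Gam n x.
Proof.
  intros Hn. rewrite (Apoly_toeplitz Gam w), (Bpoly_toeplitz Gam w), (Cpoly_toeplitz Gam w) by easy.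
  split.
  - apply (toeplitz_form_pos w m); [easy.. | apply sum_pow_seq_pos].
  - apply (toeplitz_form_cauchy_schwarz_strict w m); [easy.. | apply sum_pow_seq_pos |].
    intros t. now apply sum_pow_dpow_pencil_pos.
Qed.

Lemma continuous_F2 (K : R) (n : nat) (x : R) : (1 <= n)%nat -> continuous (F2 Gam K n) x.
Proof.
  intros Hn. destruct (Apoly_pos_Bpoly_sq_lt n x Hn).
  apply (continuous_F2_shape (Apoly Gam n) (Bpoly Gam n) (Cpoly Gam n));
    [apply continuous_Apoly | apply continuous_Bpoly | apply continuous_Cpoly | easy..].
Qed.

Lemma F2_abs_le_tail_kernel (K : R) (n : nat) (x : R) : (1 <= n)%nat -> -1 <= x <= 1 ->
  Rabs (F2 Gam K n x) <= kappa * tail_kernel K (4 * c2) (1 - Rabs x + / INR (S n)).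
Proof.
  intros Hn Hx. pose proof PI_RGT_0.
  assert (Hh : 0 < / INR (S n)) by (apply Rinv_0_lt_compat, INR_S_pos).
  assert (Hy : 0 <= x * x <= 1) by nra.
  destruct (Apoly_pos_Bpoly_sq_lt n x Hn) as [HA HD].
  set (Dx := 1 - x * x + / INR (S n)).
  assert (HDx : 0 < Dx) by (unfold Dx; lra).
  assert (Hv : 0 < 1 - Rabs x + / INR (S n) <= Dx).
  { unfold Dx, Rabs; destruct Rcase_abs; split; nra. }
  rewrite F2_as_shape.
  eapply Rle_trans.
  { apply (F2_shape_estimate _ _ _ Dx (sum_f_R0 (fun k => (x * x) ^ k) n)
             (sum_f_R0 (fun k => INR k * INR k * (x * x) ^ (k - 1)) n) c1 c2);
      unfold c1, c2; try lra.
    - apply Rmult_lt_0_compat; lra.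
    - rewrite (Apoly_toeplitz Gam w), <- sum_pow_seq_sq by easy. now apply (toeplitz_form_ge w).
    - rewrite (Apoly_toeplitz Gam w), <- sum_pow_seq_sq by easy. now apply (toeplitz_form_le w).
    - rewrite (Cpoly_toeplitz Gam w), <- sum_dpow_seq_sq by easy. now apply (toeplitz_form_le w).
    - now apply geom_sum_scaled_ge.
    - now apply geom_sum_scaled_le.
    - now apply sq_sum_scaled_le. }
  apply Rmult_le_compat_l; [apply kappa_nonneg |].
  apply (tail_kernel_antitone K (4 * c2)); [pose proof M_pos; unfold c2; nra | easy].
Qed.

Lemma RInt_F2_abs_le (K : R) (n : nat) : (1 <= n)%nat ->
  Rabs (RInt (F2 Gam K n) (-1) 1) <= kappa * (2 * PI * sqrt (4 * c2)).
Proof.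
  intros Hn. pose proof PI_RGT_0.
  assert (Hc : 0 < 4 * c2) by (pose proof M_pos; unfold c2; nra).
  assert (Hh : 0 < / INR (S n)) by (apply Rinv_0_lt_compat, INR_S_pos).
  assert (Hex : ex_RInt (fun x => tail_kernel K (4 * c2) (1 - Rabs x + / INR (S n))) (-1) 1)
    by (apply ex_RInt_tail_kernel_abs; lra).
  eapply Rle_trans; [apply abs_RInt_le; [lra |] |].
  { apply ex_RInt_continuous_R; intros; now apply continuous_F2. }
  eapply Rle_trans.
  - apply (RInt_le _ (fun x => kappa * tail_kernel K (4 * c2) (1 - Rabs x + / INR (S n)))); [lra | | | ].
    + apply ex_RInt_continuous_R; intros.
      apply (continuous_comp (F2 Gam K n) Rabs); [now apply continuous_F2 | apply continuous_Rabs].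
    + now apply ex_RInt_scal_R.
    + intros x Hx. apply F2_abs_le_tail_kernel; [easy | lra].
  - rewrite RInt_scal_R by easy.
    apply Rmult_le_compat_l; [apply kappa_nonneg | now apply RInt_tail_kernel_abs_le].
Qed.

End SpectralBounds.

Definition clamp_pi (y : R) : R := Rmax (- PI) (Rmin PI y).

Lemma clamp_pi_range (y : R) : - PI <= clamp_pi y <= PI.
Proof. pose proof PI_RGT_0. unfold clamp_pi, Rmax, Rmin; repeat destruct Rle_dec; lra. Qed.

Lemma clamp_pi_id (y : R) : - PI <= y <= PI -> clamp_pi y = y.
Proof. intros. unfold clamp_pi, Rmax, Rmin; repeat destruct Rle_dec; lra. Qed.

Lemma clamp_pi_lipschitz (a b : R) : Rabs (clamp_pi a - clamp_pi b) <= Rabs (a - b).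
Proof.
  pose proof PI_RGT_0. unfold clamp_pi, Rmax, Rmin.
  repeat destruct Rle_dec; unfold Rabs; repeat destruct Rcase_abs; lra.
Qed.

Lemma continuous_clamp_pi_extension (f : R -> R) :
  (forall phi, - PI <= phi <= PI ->
     filterlim f (within (fun y => - PI <= y <= PI) (locally phi)) (locally (f phi))) ->
  forall y, continuous (fun z => f (clamp_pi z)) y.
Proof.
  intros Hf y. unfold continuous.
  apply filterlim_comp with (G := within (fun y => - PI <= y <= PI) (locally (clamp_pi y)));
    [| apply Hf, clamp_pi_range].
  intros P [eps Heps]. exists eps. intros z Hz. apply Heps; [| apply clamp_pi_range].
  apply (Rle_lt_trans _ _ _ (clamp_pi_lipschitz z y) Hz).
Qed.

Lemma continuous_pos_bounds (g : R -> R) (a b : R) : a <= b ->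
  (forall y, continuous g y) -> (forall y, a <= y <= b -> 0 < g y) ->
  exists m M, 0 < m /\ (forall y, a <= y <= b -> m <= g y <= M).
Proof.
  intros Hab Hg Hpos.
  assert (Hpt : forall y, a <= y <= b -> continuity_pt g y)
    by (intros; apply continuity_pt_filterlim, Hg).
  destruct (continuity_ab_min g a b Hab Hpt) as [ymin [Hmin Hymin]].
  destruct (continuity_ab_maj g a b Hab Hpt) as [ymax [Hmax Hymax]].
  exists (g ymin), (g ymax). split; [now apply Hpos |]. intros; split; auto.
Qed.

Lemma le_eps_ln_ln_eventually (u : nat -> R) (C : R) :
  (forall n, (1 <= n)%nat -> u n <= C) ->
  forall eps, 0 < eps -> exists N : nat, forall n : nat, (N <= n)%nat -> u n <= eps * ln (ln (INR n)).
Proof.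
  intros Hu eps Heps.
  destruct (INR_unbounded (exp (exp (C / eps)))) as [N HN].
  exists (S N). intros n Hn.
  assert (HnN : INR N <= INR n) by (apply le_INR; lia).
  assert (L1 : exp (C / eps) < ln (INR n)).
  { rewrite <- (ln_exp (exp (C / eps))). apply ln_increasing; [apply exp_pos | lra]. }
  assert (L2 : C / eps < ln (ln (INR n))).
  { rewrite <- (ln_exp (C / eps)). apply ln_increasing; [apply exp_pos | easy]. }
  apply (Rmult_lt_compat_l eps) in L2; [| easy].
  replace (eps * (C / eps)) with C in L2 by (field; lra).
  pose proof (Hu n ltac:(lia)). lra.
Qed.

Lemma clamp_pi_extension_bounds (f : R -> R) :
  (forall phi, - PI <= phi <= PI ->
     filterlim f (within (fun y => - PI <= y <= PI) (locally phi)) (locally (f phi))) ->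
  (forall phi, - PI <= phi <= PI -> 0 < f phi) ->
  exists m M, 0 < m /\ forall y, m <= f (clamp_pi y) <= M.
Proof.
  intros Hf Hpos. pose proof PI_RGT_0.
  destruct (continuous_pos_bounds (fun z => f (clamp_pi z)) (- PI) PI)
    as [m [M [Hm HmM]]]; [lra | now apply continuous_clamp_pi_extension | |].
  - intros y Hy. rewrite clamp_pi_id by easy. now apply Hpos.
  - exists m, M. split; [easy |]. intros y.
    rewrite <- (clamp_pi_id (clamp_pi y)) by apply clamp_pi_range.
    apply HmM, clamp_pi_range.
Qed.

Lemma cos_moment_clamp_pi (Gam : Z -> R) (f : R -> R) :
  (forall k : Z, Gam k = RInt (fun phi => cos (IZR k * phi) * f phi) (- PI) PI) ->
  forall k j : nat,
    Gam (Z.of_nat k - Z.of_nat j)%Z = cos_moment (fun z => f (clamp_pi z)) (INR k - INR j).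
Proof.
  intros HGam k j. rewrite HGam, minus_IZR, <- !INR_IZR_INZ.
  apply RInt_ext. intros p Hp. pose proof PI_RGT_0.
  rewrite Rmin_left, Rmax_right in Hp by lra.
  rewrite clamp_pi_id by lra. reflexivity.
Qed.

Theorem lemma2p1 (Gam : Z -> R) (f : R -> R) (K : nat -> R)
  (hf_cont : forall phi, - PI <= phi <= PI ->
     filterlim f (within (fun y => - PI <= y <= PI) (locally phi)) (locally (f phi)))
  (hf_pos : forall phi, - PI <= phi <= PI -> 0 < f phi)
  (hGam_re : forall k : Z, Gam k = RInt (fun phi => cos (IZR k * phi) * f phi) (- PI) PI)
  (hGam_im : forall k : Z, RInt (fun phi => sin (IZR k * phi) * f phi) (- PI) PI = 0)
  (hGam0 : Gam 0%Z = 1)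
  (hK : forall eps, 0 < eps -> exists N : nat, forall n : nat, (N <= n)%nat ->
          Rabs (K n) <= eps * sqrt (INR n / ln (ln (INR n)))) :
  forall eps, 0 < eps -> exists N : nat, forall n : nat, (N <= n)%nat ->
    Rabs (RInt (F2 Gam (K n) n) (-1) 1) <= eps * ln (ln (INR n)).
Proof.
  destruct (clamp_pi_extension_bounds f hf_cont hf_pos) as [m [M [Hm HmM]]].
  eapply le_eps_ln_ln_eventually. intros n Hn.
  apply (RInt_F2_abs_le Gam (fun z => f (clamp_pi z)) m M); try easy.
  - now apply continuous_clamp_pi_extension.
  - intros p. apply HmM.
  - intros p. apply HmM.
  - now apply cos_moment_clamp_pi.
Qed.
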